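(* Let $v\equiv 1$ or $7\pmod{24}$ and $n=\frac{v-1}{6}$. If a cyclic three-fold triple system CTS$(v,3)$ has fine structure $(c_1,c_2,c_3)$ with $c_2=t$ and $c_3=s$, then $0\le s\le n$ and $0\le t\le n-s$.
   Context: A cyclic $\lambda$-fold triple system CTS$(v,\lambda)$ is a multiset $\mathcal B$ of 3-element subsets (blocks) of $\mathbb Z_v$ such that every 2-element subset of $\mathbb Z_v$ is contained in exactly $\lambda$ blocks (counted with multiplicity), and $\mathcal B$ is invariant under the translation $x\mapsto x+1$. Thus $\mathcal B$ is a union of translation orbits of 3-subsets with multiplicities; a base block is an orbit representative. The fine structure is $(c_1,\ldots,c_\lambda)$, where $c_i$ is the number of distinct base blocks (orbits) occurring with multiplicity exactly $i$. *)

From mathcomp Require Import all_boot.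
Unset Printing Implicit Defensive.

(* Points of Z_v are represented by 'I_v; the translation x |-> x+1 (mod v)
   is fintype's [ordS] (value (x.+1) %% v). *)

Definition shift1 (v : nat) (B : {set 'I_v}) : {set 'I_v} := [set @ordS v x | x in B].

Definition shiftk (v : nat) (k : nat) (B : {set 'I_v}) : {set 'I_v} :=
  iter k (shift1 v) B.

Definition orbitB (v : nat) (B : {set 'I_v}) : {set {set 'I_v}} :=
  [set shiftk v k B | k : 'I_v].

(* A multiset of blocks is given by its multiplicity function m.
   is_CTS v lam m : m describes a cyclic lam-fold triple system CTS(v,lam). *)
Definition is_CTS (v lam : nat) (m : {set 'I_v} -> nat) : Prop :=
  [/\ (forall B : {set 'I_v}, 0 < m B -> #|B| = 3),
      (forall x y : 'I_v, x != y ->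
         \sum_(B : {set 'I_v} | (x \in B) && (y \in B)) m B = lam)
    & (forall B : {set 'I_v}, m (shift1 v B) = m B)].

(* c_i : number of distinct translation orbits (base blocks) occurring
   with multiplicity exactly i *)
Definition fine_c (v : nat) (m : {set 'I_v} -> nat) (i : nat) : nat :=
  #|[set orbitB v B | B in [set B : {set 'I_v} | m B == i]]|.

(* Blocks of multiplicity at least 2 through a fixed point pairwise meet only
   in that point, since a pair lies in exactly 3 blocks; as blocks have size 3
   there are at most (v-1)/2 of them.  When 3 does not divide v a translate of
   a 3-set is never itself, so each orbit of such blocks puts exactly 3 of its
   blocks through the fixed point.  Hence there are at most (v-1)/6 orbits of
   multiplicity 2 or 3. *)
From mathcomp Require Import all_boot all_algebra.
From mathcomp Require Import zify.
Import GRing.Theory.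

Set Implicit Arguments.
Unset Strict Implicit.

Section Translation.
Variable p : nat.
Local Notation Zv := 'I_p.+1.

Definition transl (e : Zv) (B : {set Zv}) : {set Zv} := [set (x + e)%R | x in B].

Lemma ordS_addr1 (x : Zv) : ordS x = (x + inZp 1)%R.
Proof. by apply: val_inj; rewrite /= modnDmr addn1. Qed.

Lemma shift1E (B : {set Zv}) : shift1 p.+1 B = transl (inZp 1) B.
Proof. by apply: eq_imset => x; rewrite ordS_addr1. Qed.

Lemma transl_comp (e f : Zv) (B : {set Zv}) :
  transl f (transl e B) = transl (e + f)%R B.
Proof. by rewrite /transl -imset_comp; apply: eq_imset => x /=; rewrite addrA. Qed.

Lemma transl0 (B : {set Zv}) : transl 0%R B = B.
Proof. by rewrite /transl (eq_imset _ (fun x => addr0 x)) imset_id. Qed.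

Lemma shiftkE (k : nat) (B : {set Zv}) : shiftk p.+1 k B = transl (inZp k) B.
Proof.
elim: k => [|k IHk].
  have -> : inZp 0 = 0%R :> Zv by apply: val_inj.
  by rewrite transl0.
rewrite /shiftk iterS -/(shiftk p.+1 k B) IHk shift1E transl_comp.
by congr transl; apply: val_inj; rewrite /= modnDm addn1.
Qed.

Lemma orbitBE (B : {set Zv}) : orbitB p.+1 B = [set transl e B | e : Zv].
Proof. by apply: eq_imset => k; rewrite shiftkE valZpK. Qed.

Lemma orbitB_transl (e : Zv) (B : {set Zv}) :
  orbitB p.+1 (transl e B) = orbitB p.+1 B.
Proof.
rewrite !orbitBE; apply/setP => C.
apply/imsetP/imsetP => [[f _ ->]|[f _ ->]].
  by exists (e + f)%R; rewrite ?transl_comp.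
by exists (f - e)%R; rewrite // transl_comp addrC subrK.
Qed.

Lemma orbitB_refl (B : {set Zv}) : B \in orbitB p.+1 B.
Proof. by rewrite orbitBE; apply/imsetP; exists 0%R; rewrite ?transl0. Qed.

Lemma orbitB_mem (B C : {set Zv}) :
  C \in orbitB p.+1 B -> orbitB p.+1 C = orbitB p.+1 B.
Proof. by rewrite {1}orbitBE => /imsetP [e _ ->]; rewrite orbitB_transl. Qed.

(* Summing the elements of [B] gives [#|B| * d = 0] in Z_v. *)
Lemma transl_fixed (d : Zv) (B : {set Zv}) :
  coprime p.+1 #|B| -> transl d B = B -> d = 0%R.
Proof.
move=> coB dB.
have : (\sum_(x in transl d B) x = \sum_(x in B) x)%R by rewrite dB.
rewrite big_imset /=; last by move=> x y _ _; apply: addIr.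
rewrite big_split /= sumr_const -[X in (_ = X)%R]addr0 => /addrI.
rewrite Zp_mulrn => /(congr1 val) /= /eqP.
rewrite -/(dvdn _ _) Gauss_dvdl // => dvd_d.
apply: val_inj => /=; move: dvd_d (ltn_ord d).
by case: (nat_of_ord d) => // k /dvdn_leq; lia.
Qed.

Lemma card_orbitB_mem (x : Zv) (B : {set Zv}) : coprime p.+1 #|B| ->
  #|B| <= #|[set C in orbitB p.+1 B | x \in C]|.
Proof.
move=> coB.
rewrite -(@card_in_imset _ _ (fun y => transl (x - y)%R B)); last first.
  move=> y1 y2 _ _ /= /(congr1 (transl (y2 - x)%R)).
  rewrite !transl_comp [in RHS]addrA subrK subrr transl0.
  move/(transl_fixed coB)/eqP.
  by rewrite addrC addrA subrK subr_eq0 => /eqP ->.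
apply/subset_leq_card/subsetP => _ /imsetP [y yB ->].
rewrite inE -(orbitB_transl (x - y)%R) orbitB_refl /=; apply/imsetP.
by exists y; rewrite // addrC subrK.
Qed.

End Translation.

Section HeavyBlocks.
Variables (p : nat) (m : {set 'I_p.+1} -> nat).
Local Notation Zv := 'I_p.+1.
Hypothesis m_shift1 : forall B : {set Zv}, m (shift1 p.+1 B) = m B.

Lemma m_transl (e : Zv) (B : {set Zv}) : m (transl e B) = m B.
Proof.
have m_shiftk k : m (shiftk p.+1 k B) = m B.
  by elim: k => //= k IHk; rewrite /shiftk /= m_shift1.
by rewrite -(valZpK e) -shiftkE m_shiftk.
Qed.

Lemma m_orbitB (B C : {set Zv}) : C \in orbitB p.+1 B -> m C = m B.
Proof. by rewrite orbitBE => /imsetP [e _ ->]; rewrite m_transl. Qed.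

Definition heavy : {set {set Zv}} := [set B | 2 <= m B].

Definition heavy_orbits : {set {set {set Zv}}} := [set orbitB p.+1 B | B in heavy].

Lemma fine_c2_c3 : fine_c p.+1 m 2 + fine_c p.+1 m 3 <= #|heavy_orbits|.
Proof.
rewrite /fine_c; set O2 := [set _ | _ in _]; set O3 := [set _ | _ in _].
have O23 : O2 :&: O3 = set0.
  apply/setP => O; rewrite !inE; apply/negP.
  case/andP => /imsetP [B2 + ->] /imsetP [B3 + O_B3].
  rewrite !inE => /eqP mB2 /eqP mB3.
  by have := orbitB_refl B2; rewrite O_B3 => /m_orbitB; lia.
have -> : #|O2| + #|O3| = #|O2 :|: O3| by rewrite cardsU O23 cards0 subn0.
apply/subset_leq_card/subsetP => O; rewrite inE.
by case/orP => /imsetP [B + ->]; rewrite inE => /eqP mB;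
  apply/imsetP; exists B; rewrite // inE mB.
Qed.

Hypothesis card_supp : forall B : {set Zv}, 0 < m B -> #|B| = 3.
Hypothesis pair_le3 : forall x y : Zv, x != y ->
  \sum_(B : {set Zv} | (x \in B) && (y \in B)) m B <= 3.

Lemma card_heavy_mem (x : Zv) : 2 * #|[set B in heavy | x \in B]| <= p.
Proof.
set H := [set B in heavy | x \in B].
have card_Dx B : B \in H -> #|B :\ x| = 2.
  rewrite !inE => /andP [mB xB].
  by have := cardsD1 x B; rewrite xB (@card_supp B) //; [case | lia].
have -> : 2 * #|H| = \sum_(B in H) \sum_(y in B :\ x) 1.
  rewrite -sum1_card big_distrr /=; apply: eq_bigr => B /card_Dx.
  by rewrite sum1_card muln1.
rewrite (exchange_big_dep (fun y => y != x)) /=; last by move=> B y _ /setD1P [].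
apply: leq_trans (_ : _ <= \sum_(y | y != x) 1) _; last first.
  by rewrite sum1_card cardC1 card_ord.
apply: leq_sum => y yx; rewrite sum1_card; apply/card_le1_eqP => B1 B2.
move=> /andP [HB1 yB1] /andP [HB2 yB2]; move: HB1 HB2 yB1 yB2.
rewrite !inE => /andP [mB1 xB1] /andP [mB2 xB2] /andP [_ yB1] /andP [_ yB2].
apply/eqP/negPn/negP => B12.
have := pair_le3 yx; rewrite (bigD1 B1) ?xB1 ?yB1 // (bigD1 B2) /=; first by lia.
by rewrite xB2 yB2 B12.
Qed.

Hypothesis coprime_v3 : coprime p.+1 3.

Lemma card_heavy_orbits_mem (x : Zv) :
  3 * #|heavy_orbits| <= #|[set B in heavy | x \in B]|.
Proof.
rewrite -[X in _ <= X]sum1_card.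
rewrite (partition_big (orbitB p.+1) (fun O => O \in heavy_orbits)) /=; last first.
  by move=> B; rewrite inE => /andP [hB _]; apply/imsetP; exists B.
rewrite -sum1_card big_distrr /= muln1; apply: leq_sum => _ /imsetP [B hB ->].
have cB : #|B| = 3 by apply: card_supp; move: hB; rewrite inE; lia.
rewrite sum1_card -[in X in X <= _]cB.
apply: leq_trans (card_orbitB_mem x _) _; first by rewrite cB.
apply/subset_leq_card/subsetP => C; rewrite inE => /andP [CB xC].
rewrite unfold_in /= !inE xC (orbitB_mem CB) eqxx (m_orbitB CB) !andbT.
by move: hB; rewrite inE.
Qed.

Lemma card_heavy_orbits : 6 * #|heavy_orbits| <= p.
Proof. by have := card_heavy_mem ord0; have := card_heavy_orbits_mem ord0; lia. Qed.

End HeavyBlocks.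

Theorem mainTheorem7 (v : nat) (m : {set 'I_v} -> nat) (t s : nat) :
  (v %% 24 = 1 \/ v %% 24 = 7) ->
  is_CTS v 3 m ->
  fine_c v m 2 = t -> fine_c v m 3 = s ->
  let n := (v - 1) %/ 6 in
  0 <= s <= n /\ 0 <= t <= n - s.
Proof.
case: v m => [|p] m v_mod; first by case: v_mod.
case=> card_supp pair_eq3 m_shift1 <- <- n.
have coprime_v3 : coprime p.+1 3.
  rewrite coprime_sym prime_coprime //.
  by apply/negP => /dvdnP [k v_eq]; move: v_mod; rewrite v_eq; lia.
have pair_le3 x y (xy : x != y) := eq_leq (pair_eq3 x y xy).
have := fine_c2_c3 m_shift1.
have := card_heavy_orbits m_shift1 card_supp pair_le3 coprime_v3.
rewrite /n subn1 /=; lia.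
Qed.
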